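(* Let $\mathbb{K}$ be a field of characteristic zero, let $u,v\in\mathbb{K}$ with $uv\neq0$, and let $f_j=X^{\alpha_j}(uX+v)^{\beta_j}$ for $1\le j\le \ell$, where $\alpha_j,\beta_j$ are integers with $\alpha_j\ge \ell$ and $\beta_j\ge\ell$ for all $j$. If $f_1,\dots,f_\ell$ are linearly independent over $\mathbb{K}$, then \[\operatorname{val}\bigl(W(f_1,\dots,f_\ell)\bigr)\le\sum_{j=1}^\ell\alpha_j.\]
   Context: The Wronskian $W(f_1,\dots,f_\ell)$ is the determinant of the $\ell\times\ell$ matrix whose entry in row $i$ ($0\le i\le\ell-1$) and column $j$ is $f_j^{(i)}$. For a nonzero polynomial $P$, $\operatorname{val}(P)$ is the largest integer $v$ with $X^v\mid P$. *)

From HB Require Import structures.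
From mathcomp Require Import all_boot all_order all_algebra.
Set Implicit Arguments. Unset Strict Implicit. Unset Printing Implicit Defensive.
Import Order.TTheory GRing.Theory Num.Theory.
Local Open Scope ring_scope.

Definition wronskian (K : fieldType) (l : nat) (f : 'I_l -> {poly K}) : {poly K} :=
  \det (\matrix_(i < l, j < l) (f j)^`(i)).

(* val P = largest v with X^v | P  (meaningful for P != 0; then X^v | P forces v < size P) *)
Definition pval (K : fieldType) (P : {poly K}) : nat :=
  (\max_(v < size P | dvdp 'X^v P) v)%N.

Definition lin_indep (K : fieldType) (l : nat) (f : 'I_l -> {poly K}) : Prop :=
  forall c : 'I_l -> K, \sum_(j < l) c j *: f j = 0 -> forall j, c j = 0.

From HB Require Import structures.
From mathcomp Require Import all_boot all_order all_algebra zify ring.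
Set Implicit Arguments. Unset Strict Implicit. Unset Printing Implicit Defensive.
Import GRing.Theory.
Local Open Scope ring_scope.

(* We measure the X-adic valuation by the root multiplicity [mup 0] of the
   library; it is additive and bounds [pval] from above.  The proof has two
   independent halves.

   1. The Wronskian of linearly independent polynomials over a field of
      characteristic zero is nonzero.  Gaussian elimination on the lowest
      coefficients turns f into a basis g = f C whose valuations e_k are
      pairwise distinct; W(g) = W(f) det C.  After scaling the rows by X^i and
      the columns by X^(-e_k), W(g) evaluated at X = 0 is, up to the nonzero
      lowest coefficients, the determinant of the falling factorials
      (e_k)^_i, i.e. a Vandermonde determinant in the distinct e_k.

   2. With Y = uX + v, the i-th derivative of X^a Y^b is X^(a-i) Y^(b-i) t_i
      with deg t_i <= i.  Scaling row i by (XY)^i gives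
      (XY)^L W = X^(sum alpha) Y^(sum beta) det T  with L = 0 + ... + (l-1)
      and deg det T <= L; since Y(0) = v != 0, comparing valuations yields
      val W <= sum alpha. *)

Section Valuation.
Variable K : fieldType.
Implicit Types p q : {poly K}.

Lemma mup0_Xn n : mup 0 ('X^n : {poly K}) = n.
Proof. by have := mup_XsubCX n (0 : K) 0; rewrite polyC0 subr0 eqxx. Qed.

Lemma mup0_factor p : p != 0 -> exists2 q, ~~ root q 0 & p = q * 'X^(mup 0 p).
Proof.
move=> p0; have [m [q]] := multiplicity_XsubC p 0.
rewrite p0 polyC0 subr0 /= => q0 Dp; exists q => //.
by rewrite {2}Dp mupMr // mup0_Xn.
Qed.

Lemma coef_lt_mup0 p k : (k < mup 0 p)%N -> p`_k = 0.
Proof.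
have [-> _|p0 ltk] := eqVneq p 0; first by rewrite coef0.
by have [q _ Dp] := mup0_factor p0; rewrite Dp coefMXn ltk.
Qed.

Lemma coef_mup0_neq0 p : p != 0 -> p`_(mup 0 p) != 0.
Proof.
move=> p0; have [q q0 Dp] := mup0_factor p0.
by rewrite {1}Dp coefMXn ltnn subnn -horner_coef0.
Qed.

Lemma mup0_lt_size p : p != 0 -> (mup 0 p < size p)%N.
Proof.
move=> p0; rewrite ltnNge; apply: contra (coef_mup0_neq0 p0) => le_sz.
by rewrite nth_default.
Qed.

Lemma mup0_MXnM P p n : ~~ root P 0 -> p != 0 ->
  mup 0 (P * 'X^n * p) = (n + mup 0 p)%N.
Proof.
move=> P0 p0; rewrite -mulrA mupMr // mupM ?mup0_Xn //.
by rewrite expf_neq0 ?polyX_eq0.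
Qed.

Lemma pval_le_mup0 p : p != 0 -> (pval p <= mup 0 p)%N.
Proof.
move=> p0; apply/bigmax_leqP => k /= dvdXk.
by rewrite mup_geq // polyC0 subr0.
Qed.

Lemma low_coef0_factor p e : (forall k, (k < e)%N -> p`_k = 0) ->
  p = drop_poly e p * 'X^e.
Proof.
move=> low0; rewrite -[p in LHS](poly_take_drop e) [take_poly e p](_ : _ = 0) ?add0r //.
by apply/polyP => i; rewrite coef_take_poly coef0; case: ifP => // /low0.
Qed.
Lemma mup0_le_of_factor (P Q W S : {poly K}) (L A : nat) :
  ~~ root P 0 -> ~~ root Q 0 -> W != 0 -> (size S <= L.+1)%N ->
  P * 'X^L * W = Q * 'X^A * S -> (mup 0 W <= A)%N.
Proof.
move=> P0 Q0 W0 szS eqPQ.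
have S0 : S != 0.
  have P_neq0 : P != 0 by apply: contraNneq P0 => ->; rewrite root0.
  apply: contraNneq W0 => S0; move: eqPQ; rewrite S0 mulr0 => /eqP.
  by rewrite !mulf_eq0 (negbTE P_neq0) expf_eq0 polyX_eq0 andbF.
have := congr1 (mup 0) eqPQ; rewrite !mup0_MXnM // => eq_mup.
have := mup0_lt_size S0; lia.
Qed.

End Valuation.

Section DegreeBounds.
Variable K : fieldType.

Lemma size_prod_leq_sum (I : Type) (r : seq I) (F : I -> {poly K}) (d : I -> nat) :
  (forall i, (size (F i) <= (d i).+1)%N) ->
  (size (\prod_(i <- r) F i)%R <= (\sum_(i <- r) d i).+1)%N.
Proof.
move=> szF; elim: r => [|x r IH]; first by rewrite !big_nil size_poly1.
rewrite !big_cons; apply: leq_trans (size_polyMleq _ _) _.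
have := szF x; lia.
Qed.

Lemma size_det_leq n (A : 'M[{poly K}]_n) (d : 'I_n -> nat) :
  (forall i j, (size (A i j) <= (d i).+1)%N) ->
  (size (\det A) <= (\sum_i d i).+1)%N.
Proof.
move=> szA; apply: leq_trans (size_sum _ _ _) _.
by apply/bigmax_leqP => s _; rewrite size_Msign; apply: size_prod_leq_sum.
Qed.

Lemma size_deriv_leq (p : {poly K}) : (size p^`() <= (size p).-1)%N.
Proof.
have [->|p0] := eqVneq p 0; first by rewrite deriv0 size_poly0.
by have := lt_size_deriv p0; case: (size p).
Qed.

Lemma size_mulrn_leq (p : {poly K}) n : (size (p *+ n) <= size p)%N.
Proof. by rewrite -scaler_nat size_scale_leq. Qed.

End DegreeBounds.

Section Wronskian.
Variable K : fieldType.

Lemma wronskian_comb n (f : 'I_n -> {poly K}) (C : 'M[K]_n) :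
  wronskian (fun k => \sum_j C j k *: f j) = wronskian f * \det (map_mx polyC C).
Proof.
rewrite /wronskian -det_mulmx; congr determinant.
apply/matrixP => i k; rewrite !mxE (raddf_sum (@derivn K i)).
apply: eq_bigr => j _; rewrite !mxE; apply/polyP => t.
by rewrite coefMC !coef_derivn coefZ mulrnAl mulrC.
Qed.

Section CharacteristicZero.
Hypothesis hchar : [pchar K] =i pred0.

Lemma eqr_nat_char0 (m n : nat) : ((m%:R : K) == n%:R) = (m == n).
Proof.
wlog le_mn : m n / (m <= n)%N.
  move=> H; case: (leqP m n) => [|/ltnW] ?; first exact: H.
  by rewrite eq_sym H // eq_sym.
rewrite -(subnKC le_mn); set k := (n - m)%N.
rewrite natrD -{1}[m%:R]addr0 (inj_eq (addrI _)) eq_sym ((pcharf0P K).1 hchar).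
by rewrite -{1}[m]addn0 eqn_add2l eq_sym.
Qed.

Definition falling_poly (i : nat) : {poly K} := \prod_(t < i) ('X - (t%:R)%:P).

Lemma size_falling_poly i : size (falling_poly i) = i.+1.
Proof. by rewrite size_prod_XsubC [index_enum _]unlock -enumT size_enum_ord. Qed.

Lemma horner_falling_poly i (e : nat) : (falling_poly i).[e%:R] = (e ^_ i)%:R.
Proof.
elim: i => [|i IH]; first by rewrite /falling_poly big_ord0 hornerC.
rewrite /falling_poly big_ord_recr /= hornerM IH hornerXsubC ffactnSr.
case: (leqP i e) => le_ie; first by rewrite natrM natrB.
by rewrite ffact_small // !mul0r.
Qed.

(* det [e_j^_i] is nonzero for distinct e_j: the matrix is a unitriangular
   matrix (coefficients of the falling factorial polynomials) times the
   Vandermonde matrix of the e_j. *)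
Lemma det_ffact_neq0 n (e : 'I_n -> nat) :
  (forall i j : 'I_n, (i < j)%N -> e i != e j) ->
  \det (\matrix_(i < n, j < n) ((e j) ^_ i)%:R : 'M[K]_n) != 0.
Proof.
move=> e_distinct.
pose L : 'M[K]_n := \matrix_(i, k) (falling_poly i)`_k.
pose V := Vandermonde n (\row_(j < n) ((e j)%:R : K)).
have -> : (\matrix_(i < n, j < n) ((e j) ^_ i)%:R : 'M[K]_n) = L *m V.
  apply/matrixP => i j; rewrite !mxE -horner_falling_poly (@horner_coef_wide _ n).
    by apply: eq_bigr => k _; rewrite !mxE.
  by rewrite size_falling_poly.
have detL : \det L = 1.
  rewrite det_trig; last first.
    by apply/is_trig_mxP => i k lt_ik; rewrite mxE nth_default // size_falling_poly.
  apply: big1 => i _; rewrite mxE.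
  have /monicP := monic_prod_XsubC (index_enum 'I_i) xpredT (fun t : 'I_i => (t%:R : K)).
  by rewrite lead_coefE -/(falling_poly i) size_falling_poly.
rewrite det_mulmx detL mul1r det_Vandermonde prodf_seq_neq0.
apply/allP => i _ /=; rewrite prodf_seq_neq0; apply/allP => j _ /=.
by apply/implyP => lt_ij; rewrite !mxE subr_eq0 eqr_nat_char0 eq_sym e_distinct.
Qed.

Lemma coef_Xn_derivn (p : {poly K}) i k :
  ('X^i * p^`(i))`_k = p`_k * (k ^_ i)%:R.
Proof.
rewrite coefXnM; case: ltnP => le_ki; first by rewrite ffact_small // mulr0.
by rewrite coef_derivn subnKC // mulr_natr.
Qed.

(* Nonzero polynomials with distinct valuations e_j have a nonzero
   Wronskian: diag(X^i) M = H diag(X^(e_j)), and H(0) is the falling-factorial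
   matrix of the e_j with columns scaled by the lowest coefficients. *)
Lemma wronskian_distinct_val_neq0 n (G : 'I_n -> {poly K}) :
  (forall k, G k != 0) ->
  (forall k1 k2 : 'I_n, (k1 < k2)%N -> mup 0 (G k1) != mup 0 (G k2)) ->
  wronskian G != 0.
Proof.
move=> G0 val_distinct; pose e k := mup 0 (G k).
pose H := \matrix_(i < n, j < n) drop_poly (e j) ('X^i * (G j)^`(i)).
have factor : diag_mx (\row_(i < n) 'X^i) *m \matrix_(i, j) (G j)^`(i) =
              H *m diag_mx (\row_j 'X^(e j)).
  rewrite mul_diag_mx mul_mx_diag; apply/matrixP => i j; rewrite !mxE.
  by rewrite -low_coef0_factor // => k lt_k; rewrite coef_Xn_derivn coef_lt_mup0 ?mul0r.
have H0 : map_mx (horner_eval 0) H =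
          (\matrix_(i < n, j < n) ((e j) ^_ i)%:R) *m diag_mx (\row_j (G j)`_(e j)).
  rewrite mul_mx_diag; apply/matrixP => i j; rewrite !mxE horner_evalE.
  by rewrite horner_coef0 coef_drop_poly add0n coef_Xn_derivn mulrC.
have detH : \det H != 0.
  suff : horner_eval 0 (\det H) != 0 by apply: contraNneq => ->; rewrite rmorph0.
  rewrite -det_map_mx H0 det_mulmx det_diag mulf_neq0 //; first exact: det_ffact_neq0.
  by rewrite prodf_seq_neq0; apply/allP => j _ /=; rewrite mxE coef_mup0_neq0.
have Xn0 m : ('X^m : {poly K}) != 0 by rewrite expf_neq0 ?polyX_eq0.
have := congr1 determinant factor; rewrite !det_mulmx !det_diag -/(wronskian G) => eq_det.
have : \det H * \prod_j (\row_j 'X^(e j)) 0 j != 0.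
  by rewrite mulf_neq0 // prodf_seq_neq0; apply/allP => j _; rewrite mxE Xn0.
by rewrite -eq_det; apply: contraNneq => ->; rewrite mulr0.
Qed.

Section Independent.
Variables (n : nat) (f : 'I_n -> {poly K}).
Hypothesis hind : lin_indep f.

Definition comb (c : 'I_n -> K) : {poly K} := \sum_j c j *: f j.

Lemma comb_vanishing_at m (pts : 'I_m -> nat) : (m < n)%N ->
  exists c, comb c != 0 /\ forall k, (comb c)`_(pts k) = 0.
Proof.
move=> lt_mn; pose B : 'M[K]_(n, m) := \matrix_(j, k) (f j)`_(pts k).
have : ~~ row_free B by apply/negP => /eqP rkB; have := rank_leq_col B; rewrite rkB; lia.
rewrite -kermx_eq0 => /rowV0Pn [c /sub_kermxP cB c0].
exists (c 0); split.
  apply: contra c0 => /eqP /hind c_eq0; apply/eqP/rowP => j.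
  by rewrite c_eq0 mxE.
move=> k; have := congr1 (fun M : 'M[K]_(1, m) => M 0 k) cB; rewrite !mxE => ckB.
by rewrite coef_sum -[RHS]ckB; apply: eq_bigr => j _; rewrite coefZ mxE.
Qed.

(* Gaussian elimination on valuations: m <= n nonzero combinations with
   pairwise distinct valuations; the next one is chosen to vanish at all the
   valuations already used. *)
Lemma distinct_val_combinations m : (m <= n)%N -> exists C : nat -> 'I_n -> K,
  (forall k, (k < m)%N -> comb (C k) != 0) /\
  (forall k1 k2, (k1 < k2 < m)%N -> mup 0 (comb (C k1)) != mup 0 (comb (C k2))).
Proof.
elim: m => [_|m IH lt_mn].
  by exists (fun _ _ => 0); split=> // k1 k2; rewrite ltn0 andbF.
have [C [C0 C_distinct]] := IH (ltnW lt_mn).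
have [c [c0 c_vanish]] := comb_vanishing_at (fun k : 'I_m => mup 0 (comb (C k))) lt_mn.
have new_val k : (k < m)%N -> mup 0 (comb (C k)) != mup 0 (comb c).
  move=> lt_km; apply: contraNneq (coef_mup0_neq0 c0) => <-.
  by rewrite (c_vanish (Ordinal lt_km)).
exists (fun k => if k == m then c else C k); split => [k|k1 k2].
  by rewrite ltnS leq_eqVlt; case: eqVneq => [_ _|_ /= /C0].
case/andP => lt12; rewrite ltnS leq_eqVlt => /orP [/eqP k2m|lt2m].
  by subst k2; rewrite eqxx (ltn_eqF lt12) new_val.
by rewrite (ltn_eqF lt2m) (ltn_eqF (ltn_trans lt12 lt2m)) C_distinct ?lt12.
Qed.

Lemma wronskian_indep_neq0 : wronskian f != 0.
Proof.
have [C [C0 C_distinct]] := distinct_val_combinations (leqnn n).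
pose Cm : 'M[K]_n := \matrix_(j, k) C k j.
have combC k : \sum_j Cm j k *: f j = comb (C k).
  by apply: eq_bigr => j _; rewrite mxE.
have : wronskian (fun k => \sum_j Cm j k *: f j) != 0.
  apply: wronskian_distinct_val_neq0 => [k|k1 k2 lt12]; rewrite !combC.
    exact: C0.
  by apply: C_distinct; rewrite lt12 /=.
by rewrite wronskian_comb; apply: contraNneq => ->; rewrite mul0r.
Qed.

End Independent.
End CharacteristicZero.
End Wronskian.

Section DerivativesOfXaYb.
Variables (K : fieldType) (u v : K).
Let Y : {poly K} := u *: 'X + v%:P.

(* The cofactor t_i in (X^a Y^b)^(i) = X^(a-i) Y^(b-i) t_i, defined by the
   recursion obtained by differentiating once more. *)
Fixpoint deriv_cofactor (a b i : nat) : {poly K} :=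
  if i is i'.+1 then
    let t := deriv_cofactor a b i' in
    Y * t *+ (a - i') + 'X * t * u%:P *+ (b - i') + 'X * Y * t^`()
  else 1.

Lemma size_deriv_cofactor a b i : (size (deriv_cofactor a b i) <= i.+1)%N.
Proof.
elim: i => [|i IH] /=; first by rewrite size_poly1.
set t := deriv_cofactor a b i in IH *.
have szY : (size Y <= 2)%N.
  apply: leq_trans (size_polyD _ _) _.
  by rewrite geq_max (leq_trans (size_scale_leq _ _)) ?size_polyX ?(leq_trans (size_polyC_leq1 _)).
have szX := size_polyX K; have szu := size_polyC_leq1 u.
have szXt := size_polyMleq 'X t; have szXY := size_polyMleq 'X Y.
have szt' := size_deriv_leq t.
apply: leq_trans (size_polyD _ _) _; rewrite geq_max; apply/andP; split.
  apply: leq_trans (size_polyD _ _) _; rewrite geq_max; apply/andP; split.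
    apply: leq_trans (size_mulrn_leq _ _) _.
    by apply: leq_trans (size_polyMleq _ _) _; lia.
  apply: leq_trans (size_mulrn_leq _ _) _.
  by apply: leq_trans (size_polyMleq _ _) _; lia.
by apply: leq_trans (size_polyMleq _ _) _; lia.
Qed.

Lemma derivn_XaYb a b i : (i <= a)%N -> (i <= b)%N ->
  ('X^a * Y ^+ b)^`(i) = 'X^(a - i) * Y ^+ (b - i) * deriv_cofactor a b i.
Proof.
elim: i => [|i IH] le_ia le_ib; first by rewrite derivn0 !subn0 mulr1.
have derivY : Y^`() = u%:P by rewrite derivD derivZ derivX derivC addr0 alg_polyC.
rewrite derivnS IH ?(ltnW le_ia) ?(ltnW le_ib) //= -(subnSK le_ia) -(subnSK le_ib).
set A := (a - i.+1)%N; set B := (b - i.+1)%N; set t := deriv_cofactor a b i.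
rewrite !derivM derivXn deriv_exp derivY /= !exprS.
ring.
Qed.

Lemma wronskian_XaYb l (alpha beta : 'I_l -> nat) :
  (forall j, (l <= (alpha j).+1)%N) -> (forall j, (l <= (beta j).+1)%N) ->
  Y ^+ (\sum_(i < l) i) * 'X^(\sum_(i < l) i) * wronskian (fun j => 'X^(alpha j) * Y ^+ beta j) =
  Y ^+ (\sum_j beta j) * 'X^(\sum_j alpha j) *
    \det (\matrix_(i < l, j < l) deriv_cofactor (alpha j) (beta j) i).
Proof.
move=> halpha hbeta; set T := \matrix_(i < l, j < l) _.
have factor : diag_mx (\row_(i < l) (Y * 'X) ^+ i) *m
    \matrix_(i < l, j < l) ('X^(alpha j) * Y ^+ beta j)^`(i) =
    T *m diag_mx (\row_j ('X^(alpha j) * Y ^+ beta j)).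
  rewrite mul_diag_mx mul_mx_diag; apply/matrixP => i j; rewrite !mxE.
  have le_ia : (i <= alpha j)%N by rewrite -ltnS (leq_trans (ltn_ord i)).
  have le_ib : (i <= beta j)%N by rewrite -ltnS (leq_trans (ltn_ord i)).
  rewrite derivn_XaYb //.
  have -> : 'X^(alpha j) = 'X^(alpha j - i) * 'X^i :> {poly K} by rewrite -exprD subnK.
  have -> : Y ^+ beta j = Y ^+ (beta j - i) * Y ^+ i by rewrite -exprD subnK.
  by rewrite exprMn; ring.
have := congr1 determinant factor; rewrite !det_mulmx !det_diag.
rewrite (eq_bigr _ (fun i _ => mxE _ _ _ _)) [in RHS](eq_bigr _ (fun i _ => mxE _ _ _ _)).
by rewrite /wronskian prodrXr big_split /= !prodrXr exprMn => ->; ring.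
Qed.

End DerivativesOfXaYb.

Theorem lemma2p5 (K : fieldType) (hchar : [pchar K] =i pred0)
  (u v : K) (huv : u * v != 0) (l : nat) (alpha beta : 'I_l -> nat)
  (halpha : forall j, (l <= alpha j)%N) (hbeta : forall j, (l <= beta j)%N)
  (hind : lin_indep (fun j : 'I_l => 'X^(alpha j) * (u *: 'X + v%:P) ^+ beta j)) :
  let W := wronskian (fun j : 'I_l => 'X^(alpha j) * (u *: 'X + v%:P) ^+ beta j) in
  W != 0 /\ (pval W <= \sum_(j < l) alpha j)%N.
Proof.
move=> W; have W0 : W != 0 := wronskian_indep_neq0 hchar hind.
split=> //; apply: leq_trans (pval_le_mup0 W0) _.
have Y0 k : ~~ root ((u *: 'X + v%:P) ^+ k) 0.
  rewrite /root horner_exp expf_neq0 // hornerD hornerZ hornerX hornerC mulr0 add0r.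
  by move: huv; rewrite mulf_eq0 negb_or => /andP[].
have factor := wronskian_XaYb u v (fun j => leqW (halpha j)) (fun j => leqW (hbeta j)).
apply: (mup0_le_of_factor (Y0 _) (Y0 _) W0 _ factor).
by apply: size_det_leq => i j; rewrite mxE size_deriv_cofactor.
Qed.
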